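(* Let $G=(V,E)$ be a finite simple graph, let $p$ be an even path in $G$, and let $w$ be a primitive even closed walk in $G$. Then $w/p$ is an even closed walk in $G/p$. Conversely, if $v$ is an even closed walk in $G/p$, then $v=w/p$ for some even closed walk $w$ in $G$.
   Context: A walk in $G$ is a sequence of vertices $(x_0,\dots,x_n)$ with $\{x_i,x_{i+1}\}\in E$; its length is $n$, it is even if $n$ is even and closed if $x_0=x_n$. A path is a walk $(x_0,\dots,x_n)$ with $d_G(x_i)=2$ for $1\le i\le n-1$ ($d_G$ = number of neighbours). For a list of edges $w=(e_1,\dots,e_{2n})$ put $e_{w^+}=e_1e_3\cdots e_{2n-1}$, $e_{w^-}=e_2e_4\cdots e_{2n}$ (monomials in $\mathbb{K}[E]$). A closed even walk $w$ is primitive if there is no other closed even walk $v$ in $G$ with $e_{v^+}\mid e_{w^+}$ and $e_{v^-}\mid e_{w^-}$. Contracting the path $p=(x_0,\dots,x_t)$: with a new vertex $y$, $V'=(V\setminus\{x_0,\dots,x_t\})\cup\{y\}$, $\chi:V\to V'$ is the identity off $p$ and sends every $x_i$ to $y$, and $G/p$ has edge set $\{\{\chi(u),\chi(u')\}:\{u,u'\}\in E\text{ not an edge of }p\}$ (repetitions ignored). For a walk $w$ in $G$, $w/p$ denotes the walk in $G/p$ obtained from $w$ by deleting the edges of $p$ and replacing each vertex $u$ by $\chi(u)$. *)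

From mathcomp Require Import all_boot.
Set Implicit Arguments. Unset Strict Implicit. Unset Printing Implicit Defensive.

Section Graphs.
Variable V : finType.

Definition simple_graph (E : {set {set V}}) : Prop :=
  forall e, e \in E -> #|e| = 2.

Definition degree (E : {set {set V}}) (x : V) : nat :=
  #|[set u | [set x; u] \in E]|.

(* A walk (x_0, ..., x_n) is represented by its first vertex x0 and the
   list s = [:: x_1; ...; x_n]; its length is n = size s. *)
Definition is_walk (E : {set {set V}}) (x0 : V) (s : seq V) : bool :=
  path (fun a b => [set a; b] \in E) x0 s.

Definition walk_len (s : seq V) : nat := size s.

Definition is_closed (x0 : V) (s : seq V) : bool := last x0 s == x0.

Definition is_even (s : seq V) : bool := ~~ odd (size s).

Definition walk_edges (x0 : V) (s : seq V) : seq {set V} :=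
  pairmap (fun a b => [set a; b]) x0 s.

(* Closed even walks of positive length (toric-ideal convention). *)
Definition closed_even_walk (E : {set {set V}}) (x0 : V) (s : seq V) : Prop :=
  [/\ is_walk E x0 s, is_closed x0 s, is_even s & 0 < size s].

Definition is_gpath (E : {set {set V}}) (x0 : V) (s : seq V) : Prop :=
  [/\ is_walk E x0 s, uniq (x0 :: s) &
      forall i, 0 < i < size s -> degree E (nth x0 (x0 :: s) i) = 2].

End Graphs.

Fixpoint odd_pos {A : Type} (l : seq A) : seq A :=
  match l with
  | x :: _ :: r => x :: odd_pos r
  | [:: x] => [:: x]
  | [::] => [::]
  end.
Definition even_pos {A : Type} (l : seq A) : seq A := odd_pos (behead l).

(* Monomials in K[E]: a list of edges e_{i1} ... e_{ik} is the monomial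
   whose exponent at e is the multiplicity of e in the list. *)
Definition monom {V : finType} (l : seq {set V}) : {set V} -> nat :=
  fun e => count_mem e l.
Definition mon_dvd {V : finType} (m1 m2 : {set V} -> nat) : Prop :=
  forall e, m1 e <= m2 e.

Definition e_plus {V : finType} (x0 : V) (s : seq V) := monom (odd_pos (walk_edges x0 s)).
Definition e_minus {V : finType} (x0 : V) (s : seq V) := monom (even_pos (walk_edges x0 s)).

Definition primitive {V : finType} (E : {set {set V}}) (x0 : V) (s : seq V) : Prop :=
  [/\ closed_even_walk E x0 s,
      ~ (e_plus x0 s =1 e_minus x0 s) &
      forall y0 t, closed_even_walk E y0 t ->
        mon_dvd (e_plus y0 t) (e_plus x0 s) ->
        mon_dvd (e_minus y0 t) (e_minus x0 s) ->
        e_plus y0 t =1 e_plus x0 s /\ e_minus y0 t =1 e_minus x0 s].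

(* Contraction of the path p = (p0 :: ps).  The vertex set of G/p is
   represented inside option T: None is the new vertex y, Some u (u not on p)
   is the old vertex u.  chi sends vertices of p to y. *)
Section Contraction.
Variable T : finType.
Variables (p0 : T) (ps : seq T).

Definition chi (u : T) : option T := if u \in p0 :: ps then None else Some u.

Definition path_edges : seq {set T} := walk_edges p0 ps.

Definition contr_edges (E : {set {set T}}) : {set {set option T}} :=
  [set [set chi u.1; chi u.2] |
     u in [set u : T * T | ([set u.1; u.2] \in E) && ([set u.1; u.2] \notin path_edges)]].

(* w/p: delete the edges of p from w and replace each vertex u by chi u.
   Given the walk (x0 :: s), the result is (chi x0 :: contr_walk x0 s). *)
Fixpoint contr_walk (a : T) (s : seq T) : seq (option T) :=
  match s with
  | [::] => [::]
  | b :: r => if [set a; b] \in path_edges then contr_walk b r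
              else chi b :: contr_walk b r
  end.

End Contraction.

From mathcomp Require Import all_boot all_algebra zify.
Set Implicit Arguments. Unset Strict Implicit. Unset Printing Implicit Defensive.
Import GRing.Theory.

(* Colour each vertex of p by the parity of its position on p.  Since p has
   even length both ends are coloured even, and since the inner vertices of p
   have degree 2, an edge of G off p meets p only at its ends.  Along a walk
   the colour therefore changes exactly at the edges of p, so a closed walk
   uses an even number of them and w/p is again even and closed.  It is
   nonempty: a closed even walk inside p is balanced, e_{w+} = e_{w-}, which
   primitivity excludes.  Conversely every edge of G/p lifts to an edge of G
   off p, and consecutive lifts are joined by walks through p of even length
   (p itself, its reverse, or the empty walk). *)

Lemma set2_inj (T : finType) (a b c d : T) :
  [set a; b] = [set c; d] -> (a = c /\ b = d) \/ (a = d /\ b = c).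
Proof.
move=> eq_ab_cd.
have ha : a \in [set c; d] by rewrite -eq_ab_cd set21.
have hb : b \in [set c; d] by rewrite -eq_ab_cd set22.
have hc : c \in [set a; b] by rewrite eq_ab_cd set21.
have hd : d \in [set a; b] by rewrite eq_ab_cd set22.
rewrite !in_set2 in ha hb hc hd.
case/orP: ha => /eqP ea; case/orP: hb => /eqP eb; subst.
- by case/orP: hd => /eqP ->; left.
- by left.
- by right.
- by case/orP: hc => /eqP ->; right.
Qed.

Lemma all_pairmap (A B : Type) (f : A -> A -> B) (P : pred B) a s :
  all P (pairmap f a s) = path (fun u v => P (f u v)) a s.
Proof. by elim: s a => //= b s IH a; rewrite IH. Qed.

Lemma mem_pairmapP (A B : eqType) (f : A -> A -> B) a s e :
  reflect (exists2 j, j < size s & e = f (nth a (a :: s) j) (nth a (a :: s) j.+1))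
          (e \in pairmap f a s).
Proof.
apply: (iffP (nthP e)) => [[j] | [j lt_js ->]].
  by rewrite size_pairmap => lt_js <-; exists j; rewrite // (nth_pairmap a).
by exists j; rewrite ?size_pairmap // (nth_pairmap a).
Qed.

Lemma odd_pos_cons (A : Type) (x : A) s : odd_pos (x :: s) = x :: even_pos s.
Proof. by case: s. Qed.

Local Open Scope ring_scope.

(* The exponent of e in e_{w+} / e_{w-}. *)
Definition alt_count (A : eqType) (e : A) (l : seq A) : int :=
  (count_mem e (odd_pos l))%:Z - (count_mem e (even_pos l))%:Z.

Lemma alt_count_cons (A : eqType) (e : A) x s :
  alt_count e (x :: s) = (x == e)%:Z - alt_count e s.
Proof. by rewrite /alt_count odd_pos_cons /even_pos /= PoszD; lia. Qed.

Lemma alt_count_pairmap (A B : eqType) (r : rel A) (f : A -> A -> B) (e : B)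
    (h : A -> int) :
  (forall u v, r u v -> (f u v == e)%:Z = h u + h v) ->
  forall a s, path r a s ->
  alt_count e (pairmap f a s) = h a - (-1) ^+ size s * h (last a s).
Proof.
move=> step a s; elim: s a => [|b s IH] a; first by rewrite expr0 mul1r subrr.
case/andP=> r_ab s_path; rewrite [pairmap _ _ _]/= alt_count_cons IH // step //.
rewrite (exprS _ (size s)) mulN1r mulNr opprK /=; lia.
Qed.

Local Close Scope ring_scope.

Section PathContraction.
Variables (T : finType) (E : {set {set T}}) (p0 : T) (ps : seq T).
Hypothesis p_walk : is_walk E p0 ps.
Hypothesis p_uniq : uniq (p0 :: ps).
Hypothesis p_inner_deg2 :
  forall i, 0 < i < size ps -> degree E (nth p0 (p0 :: ps) i) = 2.
Hypothesis p_even : ~~ odd (size ps).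

Local Notation P := (p0 :: ps).
Local Notation x i := (nth p0 (p0 :: ps) i).
Local Notation t := (size ps).
Local Notation pe := (path_edges p0 ps).
Local Notation chi := (chi p0 ps).
Local Notation cw := (contr_walk p0 ps).

Definition along_p (u v : T) : bool := [set u; v] \in pe.

Lemma path_edge_in_E e : e \in pe -> e \in E.
Proof. by move: p_walk; rewrite /is_walk -all_pairmap => /allP; apply. Qed.

Lemma path_edgeP e : reflect (exists2 j, j < t & e = [set x j; x j.+1]) (e \in pe).
Proof. exact: mem_pairmapP. Qed.

Lemma along_p_path : path along_p p0 ps.
Proof. by rewrite -(all_pairmap _ (mem pe)); apply/allP. Qed.

Lemma index_x j : j <= t -> index (x j) P = j.
Proof. by move=> le_jt; rewrite index_uniq. Qed.

Lemma path_edge_index a b : [set a; b] \in pe ->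
  [/\ a \in P, b \in P & index b P = (index a P).+1 \/ index a P = (index b P).+1].
Proof.
case/path_edgeP=> j lt_jt /set2_inj [] [-> ->].
- by rewrite !mem_nth ?index_x //=; [split=> //; left | lia..].
- by rewrite !mem_nth ?index_x //=; [split=> //; right | lia..].
Qed.

Lemma path_edge_eq i j : i < t -> j < t ->
  ([set x i; x i.+1] == [set x j; x j.+1]) = (i == j).
Proof.
move=> lt_it lt_jt; apply/eqP/eqP => [|-> //].
by case/set2_inj=> -[/eqP + /eqP]; rewrite !nth_uniq //=; lia.
Qed.

Definition not_inner (u : T) : bool := (u \in P) ==> (u == p0) || (u == last p0 ps).

(* The two neighbours of an inner vertex x_i are x_{i-1} and x_{i+1}, both
   joined to it by edges of p. *)
Lemma nonpath_edge_not_inner u v :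
  [set u; v] \in E -> [set u; v] \notin pe -> not_inner u.
Proof.
move=> uvE uv_pe; apply/implyP => uP; set i := index u P.
have le_it : i <= t by rewrite -ltnS -[t.+1]/(size P) index_mem.
have xu : x i = u by rewrite nth_index.
case: (posnP i) => [i0 | i_gt0]; first by rewrite -xu i0 eqxx.
have [eq_it | lt_it] : i = t \/ i < t by lia.
  by rewrite -xu eq_it -(last_nth p0) eqxx orbT.
have nbrs_i : [set w | [set x i; w] \in E] = [set x i.-1; x i.+1].
  have deg2 : #|[set w | [set x i; w] \in E]| = 2 by apply: p_inner_deg2; lia.
  have ne_nbrs : x i.-1 != x i.+1 by rewrite nth_uniq //=; lia.
  apply/eqP; rewrite eq_sym eqEcard deg2 cards2 ne_nbrs andbT.
  apply/subsetP=> w; rewrite in_set2 inE => /orP [] /eqP ->; apply: path_edge_in_E.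
    by rewrite setUC; apply/path_edgeP; exists i.-1; rewrite ?prednK //; lia.
  by apply/path_edgeP; exists i.
have : v \in [set w | [set x i; w] \in E] by rewrite inE xu.
rewrite nbrs_i in_set2 => /orP [] /eqP v_def; case/negP: uv_pe; apply/path_edgeP.
  by exists i.-1; rewrite ?prednK -?xu ?v_def 1?setUC //; lia.
by exists i; rewrite -?xu ?v_def.
Qed.

Lemma nonpath_edge_not_inner2 u v : [set u; v] \in E -> [set u; v] \notin pe ->
  not_inner u /\ not_inner v.
Proof.
move=> uvE uv_pe; split; first exact: nonpath_edge_not_inner uvE uv_pe.
by apply: (nonpath_edge_not_inner (v := u)); rewrite setUC.
Qed.

Definition parity (u : T) : bool := (u \in P) && odd (index u P).

Lemma parity_not_inner u : not_inner u -> parity u = false.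
Proof.
rewrite /parity /not_inner; case: (u \in P) => // /orP [] /eqP ->.
  by rewrite index_head.
by rewrite (last_nth p0) index_x // (negbTE p_even).
Qed.

Lemma parity_path_edge a b : [set a; b] \in pe -> parity a = ~~ parity b.
Proof.
by case/path_edge_index=> aP bP; rewrite /parity aP bP => -[] ->; rewrite ?negbK.
Qed.

Lemma chi_path_edge a b : [set a; b] \in pe -> chi a = chi b.
Proof. by case/path_edge_index=> aP bP _; rewrite /chi aP bP. Qed.

Lemma odd_size_contr_walk a s : is_walk E a s ->
  odd (size (cw a s)) = odd (size s) (+) parity a (+) parity (last a s).
Proof.
elim: s a => [|b s IH] a /=; first by rewrite addbb.
case/andP=> abE /IH {}IH; case: ifP => ab_pe /=.
  by rewrite IH (parity_path_edge ab_pe); case: (odd _); case: (parity b).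
rewrite IH; have [/parity_not_inner -> /parity_not_inner ->] :=
  nonpath_edge_not_inner2 abE (negbT ab_pe).
by rewrite !addbF addNb.
Qed.

Lemma last_contr_walk a s : last (chi a) (cw a s) = chi (last a s).
Proof.
elim: s a => [|b s IH] a //=.
by case: ifP => ab_pe //=; rewrite -IH (chi_path_edge ab_pe).
Qed.

Lemma is_walk_contr_walk a s :
  is_walk E a s -> is_walk (contr_edges p0 ps E) (chi a) (cw a s).
Proof.
elim: s a => [|b s IH] a //= /andP [abE /IH {}IH].
case: ifP => ab_pe /=; first by rewrite (chi_path_edge ab_pe).
by rewrite IH andbT; apply/imsetP; exists (a, b); rewrite // inE /= abE ab_pe.
Qed.

Lemma contr_walk_nil a s : (cw a s == [::]) = path along_p a s.
Proof. by elim: s a => [|b s IH] a //=; rewrite /along_p; case: ifP. Qed.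

Lemma contr_walk_cat a s1 s2 : cw a (s1 ++ s2) = cw a s1 ++ cw (last a s1) s2.
Proof. by elim: s1 a => [|b s IH] a //=; case: ifP => _ //=; rewrite IH. Qed.

Local Open Scope ring_scope.

(* A walk along p crosses the edge x_j x_{j+1} alternately upwards and
   downwards, and the parity of the step at which it does so is fixed by the
   direction; the potential below makes this a telescoping sum. *)
Definition cut_potential (j i : nat) : int :=
  if (j < i)%N then (-1) ^+ (i - j).+1 else 0.

Lemma cut_potentialS j i : cut_potential j i + cut_potential j i.+1 = (i == j)%:Z.
Proof.
rewrite /cut_potential; case: (ltngtP j i) => [lt_ji | lt_ij | ->].
- by rewrite ltnS (ltnW lt_ji) (subSn (ltnW lt_ji)) (exprS _ (i - j).+1) mulN1r addrN.
- by rewrite ltnS leqNgt lt_ij.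
- by rewrite ltnSn subSn // subnn.
Qed.

Lemma path_edge_cut j : (j < t)%N -> forall u v, along_p u v ->
  ([set u; v] == [set x j; x j.+1])%:Z =
  cut_potential j (index u P) + cut_potential j (index v P).
Proof.
move=> lt_jt u v uv_pe; have [uP vP _] := path_edge_index uv_pe.
case/path_edgeP: uv_pe => i lt_it uv_def; rewrite uv_def path_edge_eq //.
case/set2_inj: uv_def => -[-> ->]; rewrite !index_x ?cut_potentialS //; try lia.
by rewrite addrC cut_potentialS.
Qed.

Lemma along_p_balanced a s : path along_p a s -> last a s = a -> ~~ odd (size s) ->
  e_plus a s =1 e_minus a s.
Proof.
move=> s_along closed_s even_s e.
suff : alt_count e (walk_edges a s) = 0.
  by rewrite /alt_count => /eqP; rewrite subr_eq0 => /eqP [].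
case e_pe: (e \in pe).
  case/path_edgeP: e_pe => j lt_jt ->.
  have := alt_count_pairmap (h := fun u => cut_potential j (index u P))
    (path_edge_cut lt_jt) s_along.
  rewrite /walk_edges => ->.
  by rewrite closed_s -signr_odd (negbTE even_s) expr0 mul1r subrr.
have not_e u v : along_p u v -> ([set u; v] == e)%:Z = 0 + 0.
  move=> uv_pe; case: eqP => // uv_e.
  by move: e_pe; rewrite -uv_e -/(along_p u v) uv_pe.
by rewrite (alt_count_pairmap (h := fun=> 0) not_e s_along) mulr0 subr0.
Qed.

Local Close Scope ring_scope.

Lemma contr_walk_primitive x0 s : primitive E x0 s ->
  closed_even_walk (contr_edges p0 ps E) (chi x0) (cw x0 s).
Proof.
case=> -[s_walk /eqP closed_s even_s _] unbalanced _; split.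
- exact: is_walk_contr_walk.
- by rewrite /is_closed last_contr_walk closed_s.
- by rewrite /is_even odd_size_contr_walk // closed_s -addbA addbb addbF.
rewrite lt0n size_eq0 contr_walk_nil; apply/negP => s_along.
exact/unbalanced/along_p_balanced.
Qed.

Lemma path_connector a c : chi a = chi c -> not_inner a -> not_inner c ->
  exists q, [/\ is_walk E a q, last a q = c, cw a q = [::] & ~~ odd (size q)].
Proof.
rewrite /chi /not_inner; case aP: (a \in P); case cP: (c \in P) => //=; last first.
  by case=> <- _ _; exists [::].
have along_p_sym : symmetric along_p by move=> u v; rewrite /along_p setUC.
move=> _ /orP [] /eqP -> /orP [] /eqP ->; try by exists [::].
- by exists ps; split => //; apply/eqP; rewrite contr_walk_nil along_p_path.
- exists (rev (belast p0 ps)); split.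
  + by rewrite /is_walk rev_path; apply: sub_path p_walk => u v; rewrite setUC.
  + by case: (ps) => //= z q; rewrite rev_cons last_rcons.
  + by apply/eqP; rewrite contr_walk_nil rev_path -(eq_path along_p_sym) along_p_path.
  + by rewrite size_rev size_belast.
Qed.

Lemma contr_edge_lift y b : [set y; b] \in contr_edges p0 ps E ->
  exists c d, [/\ [set c; d] \in E, [set c; d] \notin pe, chi c = y & chi d = b].
Proof.
case/imsetP=> -[u1 u2]; rewrite inE /= => /andP [uE u_pe] /set2_inj [] [-> ->].
- by exists u1, u2.
- by exists u2, u1; rewrite setUC.
Qed.

Lemma contr_walk_lift s' y0 x0 z : is_walk (contr_edges p0 ps E) y0 s' ->
  chi x0 = y0 -> not_inner x0 -> chi z = last y0 s' -> not_inner z ->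
  exists s, [/\ is_walk E x0 s, last x0 s = z, cw x0 s = s'
              & odd (size s) = odd (size s')].
Proof.
elim: s' y0 x0 => [|b s' IH] y0 x0 /=.
  move=> _ <- x0_ok /esym z_def z_ok.
  have [q [q_walk q_last q_nil q_even]] := path_connector z_def x0_ok z_ok.
  by exists q; split => //; apply: negbTE.
case/andP=> /contr_edge_lift [c [d [cdE cd_pe <- <-]]] s'_walk x0_def x0_ok z_def z_ok.
have [c_ok d_ok] := nonpath_edge_not_inner2 cdE cd_pe.
have [q [q_walk q_last q_nil q_even]] := path_connector x0_def x0_ok c_ok.
have [r [r_walk r_last r_cw r_odd]] := IH _ _ s'_walk erefl d_ok z_def z_ok.
exists (q ++ d :: r); split.
- by rewrite /is_walk cat_path -/(is_walk E x0 q) q_walk /= q_last cdE.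
- by rewrite last_cat q_last.
- by rewrite contr_walk_cat q_nil q_last /= (negbTE cd_pe) r_cw.
- by rewrite size_cat oddD /= (negbTE q_even) r_odd.
Qed.

Lemma contr_closed_even_walk_lift y0 s' :
  closed_even_walk (contr_edges p0 ps E) y0 s' ->
  exists x0 s, closed_even_walk E x0 s /\ chi x0 = y0 /\ cw x0 s = s'.
Proof.
case: s' => [[_ _ _] //| b r] [s'_walk /eqP s'_closed s'_even _].
have [c [d [cdE cd_pe c_def _]]] := contr_edge_lift (proj1 (andP s'_walk)).
have [c_ok _] := nonpath_edge_not_inner2 cdE cd_pe.
have z_def : chi c = last y0 (b :: r) by rewrite s'_closed.
have [s [s_walk s_last s_cw s_odd]] := contr_walk_lift s'_walk c_def c_ok z_def c_ok.
exists c, s; do !split => //.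
- by rewrite /is_closed s_last.
- by rewrite /is_even s_odd.
- by case: s s_cw {s_walk s_last s_odd}.
Qed.

End PathContraction.

Theorem lemma2p6 (T : finType) (E : {set {set T}}) (p0 : T) (ps : seq T) :
  simple_graph E -> is_gpath E p0 ps -> ~~ odd (size ps) ->
  (forall (x0 : T) (s : seq T), primitive E x0 s ->
     closed_even_walk (contr_edges p0 ps E) (chi p0 ps x0) (contr_walk p0 ps x0 s)) /\
  (forall (y0 : option T) (s' : seq (option T)),
     closed_even_walk (contr_edges p0 ps E) y0 s' ->
     exists (x0 : T) (s : seq T),
       closed_even_walk E x0 s /\ chi p0 ps x0 = y0 /\ contr_walk p0 ps x0 s = s').
Proof.
move=> _ [p_walk p_uniq p_inner_deg2] p_even; split.
- exact: contr_walk_primitive.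
- exact: contr_closed_even_walk_lift.
Qed.
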